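(* Let $k,d,b,\tilde b\ge0$ be measurable on $\mathbb{R}_+$ with $\int_0^{+\infty}k=\int_0^{+\infty}d=+\infty$ and $1<\int_0^{+\infty}\big(b(a)e^{-\int_0^ak}+\tilde b(a)e^{-\int_0^ad}\big)da<+\infty$. Let $c,\eta,\tilde c\in L^\infty_{loc}(\mathbb{R}^2)$ vanish at $(0,0)$, be nonnegative on $\mathbb{R}_+^2$, set $c_{tot}=c+\eta$, and assume $\partial_xc_{tot}>0$, $\partial_yc_{tot}\ge0$, $\partial_x\tilde c\ge0$, $\partial_y\tilde c>0$ and, for all $x_0,y_0\ge0$, $\tilde c(x_0,y)\to+\infty$ as $y\to+\infty$ and $c(x,y_0)\to+\infty$ as $x\to+\infty$. Assume moreover $$\Big\|\frac{\partial c_{tot}}{\partial y}\Big\|_\infty\le\inf_{(x,y)\in\mathbb{R}_+^2}\frac{\partial c_{tot}}{\partial x}(x,y).$$ Then every nonnegative solution $(N_1^*,N_2^* )$ of the steady-state system $$\int_0^{+\infty}\tilde b(a)e^{-\int_0^ad(u)du-\tilde c(N_1,N_2)a}da\cdot\int_0^{+\infty}\big(k(a)+\eta(N_1,N_2)\big)e^{-\int_0^ak(u)du-c_{tot}(N_1,N_2)a}da+\int_0^{+\infty}b(a)e^{-\int_0^ak(u)du-c_{tot}(N_1,N_2)a}da=1,$$ $$N_1\int_0^{+\infty}e^{-\int_0^ad(u)du-\tilde c(N_1,N_2)a}da\cdot\int_0^{+\infty}\big(k(a)+\eta(N_1,N_2)\big)e^{-\int_0^ak(u)du-c_{tot}(N_1,N_2)a}da-N_2\int_0^{+\infty}e^{-\int_0^ak(u)du-c_{tot}(N_1,N_2)a}da=0$$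 satisfies $N_1^*+N_2^*\ge N^*$, where $N^*$ is defined in the context.
   Context: $N^*$ is the total population size at the (unique) steady state of the one-phase model $\partial_tn+\partial_an=-(k(a)+c_{tot}(N(t),0))n$, $n(t,0)=\int_0^{+\infty}bn\,da$, $N(t)=\int_0^{+\infty}n(t,a)da$. Explicitly: if $\int_0^{+\infty}b(a)e^{-\int_0^ak}da>1$, let $\mu_0>0$ be the unique solution of $\int_0^{+\infty}b(a)e^{-\int_0^ak(u)du-\mu_0a}da=1$ and let $N^*>0$ be the unique value with $c_{tot}(N^*,0)=\mu_0$; if $\int_0^{+\infty}b(a)e^{-\int_0^ak}da\le1$, then $N^*=0$. The steady-state system characterises non-trivial steady states $(N_1,N_2)=(\int n_1^*,\int n_2^* )$ of the two-phase model with competition kernels identically equal to one. *)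

From HB Require Import structures.
From mathcomp Require Import all_boot all_order all_algebra.
From mathcomp Require Import all_classical all_reals all_analysis.
Set Implicit Arguments. Unset Strict Implicit. Unset Printing Implicit Defensive.
Import Order.TTheory GRing.Theory Num.Theory.
Import numFieldNormedType.Exports.
Local Open Scope classical_set_scope.
Local Open Scope ring_scope.

Section defs.
Context {R : realType}.
Local Notation mu := (@lebesgue_measure R).

Definition cumul (k : R -> R) (a : R) : \bar R :=
  (\int[mu]_(u in `[0%R, a]%classic) (k u)%:E)%E.

(* surv k m a = exp(- \int_0^a k - m a), with exp(-oo) = 0 *)
Definition surv (k : R -> R) (m : R) (a : R) : \bar R :=
  expeR (- cumul k a - (m * a)%:E)%E.

Definition Iplus (f : R -> \bar R) : \bar R :=
  (\int[mu]_(a in `[0%R, +oo[%classic) f a)%E.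

Definition dx (f : R -> R -> R) (x y : R) : R := derive1 (fun t => f t y) x.
Definition dy (f : R -> R -> R) (x y : R) : R := derive1 (fun t => f x t) y.

Definition partials_on_Rplus2 (f : R -> R -> R) : Prop :=
  forall x y, 0 <= x -> 0 <= y ->
    derivable (fun t => f t y) x 1 /\ derivable (fun t => f x t) y 1.

Definition leb2 := (mu \x mu)%E.

Definition Linfty_loc (f : R -> R -> R) : Prop :=
  measurable_fun setT (fun p : R * R => f p.1 p.2) /\
  forall r : R, 0 < r -> exists M : R,
    {ae leb2, forall p : R * R, `|p.1| <= r -> `|p.2| <= r -> `|f p.1 p.2| <= M}.

(* N is the total population N^* at the steady state of the one-phase model *)
Definition is_Nstar (k b : R -> R) (ctot : R -> R -> R) (N : R) : Prop :=
  ((1 < Iplus (fun a => (b a)%:E * surv k 0 a))%E /\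
    exists mu0 : R, 0 < mu0 /\
      Iplus (fun a => (b a)%:E * surv k mu0 a)%E = 1%E /\
      0 < N /\ ctot N 0 = mu0)
  \/ ((Iplus (fun a => (b a)%:E * surv k 0 a) <= 1)%E /\ N = 0).

End defs.

From HB Require Import structures.
From mathcomp Require Import all_boot all_order all_algebra.
From mathcomp Require Import all_classical all_reals all_analysis.
From mathcomp Require Import measurable_realfun ring lra.
Set Implicit Arguments. Unset Strict Implicit. Unset Printing Implicit Defensive.
Import Order.TTheory GRing.Theory Num.Theory.
Import numFieldNormedType.Exports.
Local Open Scope classical_set_scope.
Local Open Scope ring_scope.

(* If [N^* = 0] there is nothing to prove; otherwise assume [N1 + N2 < N^*].
   Since [|d_y c_tot| <= inf d_x c_tot], moving the mass [N2] from the second to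
   the first argument does not decrease [c_tot], and [d_x c_tot > 0], so
   [c_tot(N1, N2) <= c_tot(N1 + N2, 0) < c_tot(N^*, 0) = mu0].  The first
   steady-state equation bounds [\int b exp(-\int k - c_tot(N1, N2) a)] by [1],
   but this integral is strictly decreasing in the rate and equals [1] at [mu0].

   The bound on [d_y c_tot] only holds almost everywhere in the plane, so on
   almost every vertical line we use that a function which is differentiable
   everywhere, with nonpositive derivative outside a null set [Z], is
   nonincreasing.  To see this, cover [Z] by open sets [U n] with
   [n |U n| <= e / 2^(n+1)]: then [g t - g 0 - e t] stays below
   [sum_n n |U n /\ [0, t]|], which is at most [e].  Continuity in the first
   variable carries the resulting inequality to the line through [N1]. *)

Section weighted_cover.
Context {R : realType}.
Local Notation mu := (@lebesgue_measure R).
Local Open Scope ereal_scope.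
Variable U : nat -> set R.
Hypothesis mU : forall n, measurable (U n).

Definition weighted_cover (t : R) : \bar R :=
  \sum_(0 <= n <oo) ((n%:R)%:E * mu (U n `&` `[0%R, t]%classic)).

Let mUI n t : measurable (U n `&` `[0%R, t]%classic).
Proof. exact: measurableI. Qed.

Let term_ge0 n t : 0 <= (n%:R)%:E * mu (U n `&` `[0%R, t]%classic).
Proof. exact: mule_ge0. Qed.

Lemma weighted_cover_ge0 t : 0 <= weighted_cover t.
Proof. exact: nneseries_ge0. Qed.

Lemma le_weighted_cover s t : (s <= t)%R -> weighted_cover s <= weighted_cover t.
Proof.
move=> st; apply: lee_nneseries => // n _; apply: lee_wpmul2l => //.
apply: le_measure; rewrite ?inE; [exact: mUI | exact: mUI |].
by apply: setIS => x /=; rewrite !in_itv /= => /andP[-> /le_trans]; apply.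
Qed.

Lemma lebesgue_measure_itv_oc (s t : R) : (s <= t)%R -> mu `]s, t]%classic = (t - s)%:E.
Proof.
move=> st; rewrite lebesgue_measure_itv /= lte_fin.
case: ltP => [_|ts]; first by rewrite EFinB.
have -> : t = s by apply/eqP; rewrite eq_le st ts.
by rewrite subrr.
Qed.

Lemma weighted_cover_step n s t : (0 <= s)%R -> (s <= t)%R -> `[s, t]%classic `<=` U n ->
  weighted_cover s + (n%:R * (t - s))%:E <= weighted_cover t.
Proof.
move=> s0 st stU.
have grow : mu (U n `&` `[0%R, s]%classic) + (t - s)%:E <= mu (U n `&` `[0%R, t]%classic).
  rewrite -lebesgue_measure_itv_oc // -measureU;
    [| exact: mUI | exact: measurable_itv |]; last first.
    apply/seteqP; split => x //= [[_]]; rewrite !in_itv /= => /andP[_ xs] /andP[sx _].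
    by move: (lt_le_trans sx xs); rewrite ltxx.
  apply: le_measure; rewrite ?inE; [|exact: mUI|].
    by apply: measurableU; [exact: mUI | exact: measurable_itv].
  move=> x [[Ux /=]|]; rewrite /= !in_itv /=.
    by move=> /andP[-> xs]; rewrite (le_trans xs st).
  move=> /andP[sx xt]; split; last by rewrite xt (le_trans s0 (ltW sx)).
  by apply: stU; rewrite /= in_itv /= xt (ltW sx).
rewrite /weighted_cover (@nneseriesD1 _ _ n) // [leRHS](@nneseriesD1 _ _ n) //.
rewrite addeAC; apply: leeD.
  rewrite EFinM -ge0_muleDr ?lee_fin ?subr_ge0 //.
  exact: lee_wpmul2l.
apply: lee_nneseries => // k _; apply: lee_wpmul2l => //.
apply: le_measure; rewrite ?inE; [exact: mUI | exact: mUI |].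
by apply: setIS => x /=; rewrite !in_itv /= => /andP[-> /le_trans]; apply.
Qed.

Lemma weighted_cover_le (e : R) : (0 <= e)%R ->
  (forall n, n%:R%:E * mu (U n) <= (e / (2 ^ n.+1)%:R)%:E) ->
  forall t, weighted_cover t <= e%:E.
Proof.
move=> e0 HU t; apply: le_trans (epsilon_trick0 xpredT e0).
apply: lee_nneseries => // n _; apply: le_trans (HU n); apply: lee_wpmul2l => //.
by apply: le_measure; rewrite ?inE; [exact: mUI | exact: mU | apply: subIsetl].
Qed.

End weighted_cover.

Section nonincreasing_ae.
Context {R : realType}.
Local Notation mu := (@lebesgue_measure R).

Lemma derivable_slope_right (g : R -> R) s (eps : R) : derivable g s 1 -> 0 < eps ->
  exists2 δ, 0 < δ & forall t, s < t < s + δ -> g t - g s <= ('D_1 g s + eps) * (t - s).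
Proof.
move=> dg e0; have /cvgrPdist_lt/(_ _ e0)/nbhs_ballP[δ δ0 Hδ] := dg.
exists δ => // t /andP[st tsd].
have ts0 : 0 < t - s by rewrite subr_gt0.
have := Hδ (t - s).
rewrite /ball /= sub0r normrN gtr0_norm // ltrBlDr addrC tsd gt_eqF // => /(_ isT isT).
rewrite -/('D_1 g s) /= [_%:A]mulr1 subrK distrC => /(le_lt_trans (ler_norm _)).
rewrite ltrBlDr [_ *: _]mulrC ltr_pdivrMr // addrC => /ltW.
by rewrite addrC [eps + _]addrC.
Qed.

Lemma interval_induction (P : R -> Prop) (L : R) : 0 <= L -> P 0 ->
  (forall s, 0 <= s <= L -> (forall δ, 0 < δ -> exists2 t, s - δ < t <= s & P t) -> P s) ->
  (forall s, 0 <= s < L -> P s -> exists2 δ, 0 < δ & forall t, s < t < s + δ -> P t) ->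
  P L.
Proof.
move=> L0 P0 closed step.
pose S := [set t | 0 <= t <= L /\ P t].
have S0 : S 0 by split; rewrite ?lexx ?L0.
have hasS : has_sup S by split; [exists 0 | exists L => t [/andP[_]]].
have s0 : 0 <= sup S := sup_upper_bound hasS S0.
have sL : sup S <= L by apply: ge_sup; [exists 0 | move=> t [/andP[_]]].
have Ps : P (sup S).
  apply: closed => [|δ δ0]; first by rewrite s0 sL.
  have [t St st] := sup_adherent δ0 hasS.
  by exists t; [rewrite st sup_upper_bound | case: St].
suff <- : sup S = L by [].
apply/eqP; rewrite eq_le sL /= leNgt; apply/negP => sLt.
have [δ δ0 Pnext] := step (sup S) (ltac:(by apply/andP)) Ps.
pose m := Num.min δ (L - sup S).
have m0 : 0 < m by rewrite lt_min δ0 subr_gt0 sLt.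
have [mδ mL] : m <= δ /\ m <= L - sup S by rewrite /m !ge_min !lexx orbT.
have St : S (sup S + m / 2).
  split; first by apply/andP; split; lra.
  by apply: Pnext; apply/andP; split; lra.
by have := sup_upper_bound hasS St; lra.
Qed.

Lemma null_set_open_covers (Z : set R) (e : R) : measurable Z -> mu Z = 0%E -> 0 < e ->
  exists U : nat -> set R, forall n, [/\ open (U n), Z `<=` U n &
    (n%:R%:E * mu (U n) <= (e / (2 ^ n.+1)%:R)%:E)%E].
Proof.
move=> mZ Z0 e0.
suff /choice[U HU] : forall n : nat, exists V : set R, [/\ open V, Z `<=` V &
    (n%:R%:E * mu V <= (e / (2 ^ n.+1)%:R)%:E)%E] by exists U.
move=> n.
pose w := e / (2 ^ n.+1)%:R / n.+1%:R.
have w0 : 0 < w by rewrite !divr_gt0 // ltr0n expn_gt0.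
have muZ : (mu Z < +oo)%E by rewrite Z0 ltry.
have [V [oV ZV VZ]] := lebesgue_regularity_outer mZ muZ w0.
exists V; split => //.
have mV : measurable V by exact: open_measurable.
have muV : (mu V <= w%:E)%E.
  apply: (@le_trans _ _ (mu (Z `|` (V `\` Z)))).
    apply: le_measure; rewrite ?inE; [exact: mV | exact: measurableU (measurableD _ _) |].
    by move=> x Vx; have [Zx|nZx] := pselect (Z x); [left|right].
  apply: le_trans (measureU2 _ _ _) _ => //; first exact: measurableD.
  rewrite [X in (X + _ <= _)%E](_ : _ = 0%E); last exact: Z0.
  by rewrite add0e ltW.
apply: le_trans (lee_wpmul2l _ muV) _ => //.
rewrite -EFinM lee_fin /w mulrCA; apply: ler_piMr; first by rewrite divr_ge0 // ltW.
by rewrite ler_pdivrMr ?ltr0n // mul1r ler_nat.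
Qed.

Section covering_argument.
Variables (g : R -> R) (Z : set R) (U : nat -> set R) (e : R).
Hypotheses (oU : forall n, open (U n)) (ZU : forall n, Z `<=` U n) (e0 : 0 < e).

Let mU n : measurable (U n). Proof. exact: open_measurable. Qed.
Let below t := ((g t - g 0 - e * t)%:E <= weighted_cover U t)%E.

Lemma below_cover_closed s : {for s, continuous g} ->
  (forall δ, 0 < δ -> exists2 t, s - δ < t <= s & below t) -> below s.
Proof.
move=> gc adh; apply/lee_addgt0Pr => η η0.
have /cvgrPdist_lt/(_ _ η0)/nbhs_ballP[δ δ0 Hδ] := gc.
have [t /andP[st ts] Qt] := adh δ δ0.
have /(le_lt_trans (ler_norm _)) : `|g s - g t| < η.
  by apply: Hδ; rewrite /ball /= ger0_norm ?subr_ge0 //; lra.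
have : e * t <= e * s by rewrite ler_wpM2l // ltW.
move=> ets gst; apply: (@le_trans _ _ ((g t - g 0 - e * t)%:E + η%:E)%E).
  by rewrite -EFinD lee_fin; lra.
by apply: leeD => //; apply: le_trans Qt (le_weighted_cover mU ts).
Qed.

(* On [Z] the derivative may be large, but [U n] with [n >= g'(s) + 1] contains a
   right neighbourhood of [s] on which the cover grows faster than [g]. *)
Lemma below_cover_step_null s : 0 <= s -> Z s -> derivable g s 1 -> below s ->
  exists2 δ, 0 < δ & forall t, s < t < s + δ -> below t.
Proof.
move=> s0 Zs dg Qs.
pose n := (Num.truncn `|'D_1 g s|).+2.
have Dn : 'D_1 g s + 1 <= n%:R.
  have := truncnS_gt `|'D_1 g s|; rewrite /n -addn1 natrD.
  by have := ler_norm ('D_1 g s); lra.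
have [δ1 δ10 Hδ1] := derivable_slope_right dg ltr01.
have /nbhs_ballP[δ2 δ20 Hδ2] : nbhs s (U n).
  by apply: open_nbhs_nbhs; split => //; apply: ZU.
exists (Num.min δ1 δ2) => [|t /andP[st tsd]]; first by rewrite lt_min δ10 δ20.
have [tsd1 tsd2] : t < s + δ1 /\ t < s + δ2.
  by split; apply: lt_le_trans tsd _; rewrite lerD2l ge_min lexx ?orbT.
have : s < t < s + δ1 by rewrite st tsd1.
move=> /Hδ1 slope.
have sub : `[s, t]%classic `<=` U n.
  move=> x /=; rewrite in_itv /= => /andP[sx xt]; apply: Hδ2.
  rewrite /ball /= ler0_norm ?subr_le0 // opprB ltrBlDr addrC.
  exact: le_lt_trans xt tsd2.
apply: le_trans (weighted_cover_step mU s0 (ltW st) sub).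
apply: le_trans (leeD Qs (lexx _)); rewrite -EFinD lee_fin.
have : ('D_1 g s + 1) * (t - s) <= n%:R * (t - s) by rewrite ler_wpM2r // subr_ge0 ltW.
have : 0 <= e * (t - s) by rewrite mulr_ge0 // ?subr_ge0 ltW.
lra.
Qed.

Lemma below_cover_step_regular s : derivable g s 1 -> 'D_1 g s <= 0 -> below s ->
  exists2 δ, 0 < δ & forall t, s < t < s + δ -> below t.
Proof.
move=> dg D0 Qs; have [δ δ0 Hδ] := derivable_slope_right dg e0.
exists δ => // t /andP[st tsd].
have : s < t < s + δ by rewrite st tsd.
move=> /Hδ slope.
have : ('D_1 g s + e) * (t - s) <= e * (t - s).
  by apply: ler_wpM2r; [rewrite subr_ge0 ltW | lra].
move=> slope_le; apply: le_trans (le_weighted_cover mU (ltW st)).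
by apply: le_trans Qs; rewrite lee_fin; lra.
Qed.

End covering_argument.

Lemma le_derive1_ae_le0 (g : R -> R) (L : R) (Z : set R) :
  0 <= L -> measurable Z -> mu Z = 0%E ->
  (forall y, 0 <= y <= L -> derivable g y 1) ->
  (forall y, 0 <= y <= L -> ~ Z y -> 'D_1 g y <= 0) ->
  g L <= g 0.
Proof.
move=> L0 mZ Z0 dg dZ; apply/ler_addgt0Pr => e' e'0.
have L10 : 0 < L + 1 by rewrite ltr_wpDl.
pose e := e' / (L + 1).
have e0 : 0 < e by rewrite divr_gt0.
have [U HU] := null_set_open_covers mZ Z0 e0.
have oU n : open (U n) by case: (HU n).
have ZU n : Z `<=` U n by case: (HU n).
have Ubound n : (n%:R%:E * mu (U n) <= (e / (2 ^ n.+1)%:R)%:E)%E by case: (HU n).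
have mU n : measurable (U n) by exact: open_measurable.
have : ((g L - g 0 - e * L)%:E <= weighted_cover U L)%E.
  apply: (@interval_induction (fun t => (g t - g 0 - e * t)%:E <= weighted_cover U t)%E).
  - exact: L0.
  - by rewrite subrr mulr0 subr0; exact: weighted_cover_ge0.
  - move=> s sL; apply: (below_cover_closed oU e0).
    by apply: differentiable_continuous; rewrite -derivable1_diffP; apply: dg.
  - move=> s /andP[s0 sL] Qs; have sLb : 0 <= s <= L by rewrite s0 ltW.
    have [Zs|nZs] := pselect (Z s).
    + exact: (below_cover_step_null oU ZU e0 s0 Zs (dg s sLb) Qs).
    + exact: (below_cover_step_regular oU e0 (dg s sLb) (dZ s sLb nZs) Qs).
move=> /le_trans/(_ (weighted_cover_le mU (ltW e0) Ubound L)).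
have : e * (L + 1) = e' by rewrite /e divfK // gt_eqF.
by rewrite lee_fin; lra.
Qed.

End nonincreasing_ae.

Section product_null_sets.
Context {R : realType}.
Local Notation mu := (@lebesgue_measure R).

Lemma null_xsections (N : set (R * R)) : measurable N -> leb2 N = 0%E ->
  exists Nx : set R, [/\ measurable Nx, mu Nx = 0%E &
    forall x, ~ Nx x -> mu (xsection N x) = 0%E].
Proof.
move=> mN N0.
have mf : measurable_fun setT (fun x => mu (xsection N x)).
  exact: measurable_fun_xsection.
have := (ae_eq_integral_abs mu measurableT mf).1.
have -> : (\int[mu]_(x in setT) `|mu (xsection N x)|)%E = leb2 N.
  by apply: eq_integral => x _; rewrite gee0_abs.
move=> /(_ N0) [Nx [mNx Nx0 HNx]]; exists Nx; split => // x nNx.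
by apply: contrapT => H; apply: nNx; apply: HNx => /= /(_ I).
Qed.

Lemma le_at_of_ae_right (f : R -> R) (a K : R) (Nx : set R) :
  measurable Nx -> mu Nx = 0%E -> {for a, continuous f} ->
  (forall x, a < x -> ~ Nx x -> f x <= K) -> f a <= K.
Proof.
move=> mNx Nx0 fc fK; apply/ler_addgt0Pr => η η0.
have /cvgrPdist_lt/(_ _ η0)/nbhs_ballP[δ δ0 Hδ] := fc.
have [x /andP[ax xaδ] nNx] : exists2 x, a < x < a + δ & ~ Nx x.
  apply: contrapT => H.
  have : (mu `]a, (a + δ)%R[%classic <= mu Nx)%E.
    apply: le_measure; rewrite ?inE //.
    move=> x /=; rewrite in_itv /= => xin; apply: contrapT => nN; apply: H.
    by exists x.
  rewrite Nx0 lebesgue_measure_itv /= lte_fin ltrDl δ0 lee_fin addrAC subrr add0r.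
  by rewrite leNgt δ0.
have /(le_lt_trans (ler_norm _)) : `|f a - f x| < η.
  by apply: Hδ; rewrite /ball /= ltr0_norm ?subr_lt0 //; lra.
by have := fK x ax nNx; lra.
Qed.

End product_null_sets.

Section partial_derivatives.
Context {R : realType}.
Local Notation mu := (@lebesgue_measure R).
Variable C : R -> R -> R.
Hypothesis dC : partials_on_Rplus2 C.

Lemma partial_x_continuous (x y : R) : 0 <= x -> 0 <= y ->
  {for x, continuous (fun t => C t y)}.
Proof.
move=> x0 y0; apply: differentiable_continuous; rewrite -derivable1_diffP.
by case: (dC x0 y0).
Qed.

Lemma partial_x_MVT (a b y : R) : 0 <= a -> a < b -> 0 <= y ->
  exists2 ζ, ζ \in `]a, b[ & C b y - C a y = dx C ζ y * (b - a).
Proof.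
move=> a0 ab y0; apply: (@MVT R (fun t => C t y) (fun x => dx C x y)) => //.
  move=> x; rewrite in_itv /= => /andP[ax _].
  have [dfx _] := dC (le_trans a0 (ltW ax)) y0.
  by rewrite /dx derive1E; exact: derivableP.
apply: derivable_within_continuous => x; rewrite in_itv /= => /andP[ax _].
by case: (dC (le_trans a0 ax) y0).
Qed.

Lemma partial_x_pos_lt (a b y : R) : 0 <= a -> a < b -> 0 <= y ->
  (forall x, 0 <= x -> 0 < dx C x y) -> C a y < C b y.
Proof.
move=> a0 ab y0 dpos; have [ζ ζin Hζ] := partial_x_MVT a0 ab y0.
have ζ0 : 0 <= ζ by move: ζin; rewrite in_itv /= => /andP[/ltW/(le_trans a0)].
have : 0 < dx C ζ y * (b - a) by rewrite mulr_gt0 ?dpos // subr_gt0.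
by rewrite -Hζ subr_gt0.
Qed.

Lemma partial_y_ae_bound_le (x M L : R) (Z : set R) :
  0 <= x -> 0 <= L -> measurable Z -> mu Z = 0%E ->
  (forall y, 0 <= y -> ~ Z y -> `|dy C x y| <= M) -> C x L <= C x 0 + M * L.
Proof.
move=> x0 L0 mZ Z0 dyM.
have ig (y : R) : 0 <= y -> is_derive y 1 (fun y => C x y - M * y) (dy C x y - M).
  move=> y0; have [_ d1] := dC x0 y0.
  have := is_deriveB (derivableP d1) (is_deriveZ M (is_derive_id y 1)).
  have -> : (fun t => C x t) - M \*: id = (fun y => C x y - M * y) by apply/funext.
  by rewrite /dy derive1E [M *: 1]mulr1.
suff : C x L - M * L <= C x 0 - M * 0 by lra.
apply: (le_derive1_ae_le0 (g := fun y => C x y - M * y) L0 mZ Z0).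
  by move=> y /andP[y0 _]; case: (ig y y0).
move=> y /andP[y0 _] nZ; case: (ig y y0) => _ ->; rewrite subr_le0.
exact: le_trans (ler_norm _) (dyM y y0 nZ).
Qed.

Lemma le_shift_to_first (N1 N2 : R) : 0 <= N1 -> 0 <= N2 ->
  (forall x' y', 0 <= x' -> 0 <= y' ->
     {ae leb2, forall p : R * R, 0 <= p.1 -> 0 <= p.2 ->
        `|dy C p.1 p.2| <= dx C x' y'}) ->
  C N1 N2 <= C (N1 + N2) 0.
Proof.
move=> N10 N20 hae.
have [->|N2pos] := eqVneq N2 0; first by rewrite addr0.
have N2gt : 0 < N2 by rewrite lt_neqAle eq_sym N2pos N20.
have [ζ ζin Hζ] := partial_x_MVT N10 (ltr_pwDr N2gt (lexx N1)) (lexx 0).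
have ζ0 : 0 <= ζ by move: ζin; rewrite in_itv /= => /andP[/ltW/(le_trans N10)].
have [Nb [mNb Nb0 HNb]] := hae ζ 0 ζ0 (lexx 0).
have [Nx [mNx Nx0 HNx]] := null_xsections mNb Nb0.
suff : C N1 N2 - C N1 0 <= dx C ζ 0 * N2 by move: Hζ; rewrite addrAC subrr add0r; lra.
apply: (le_at_of_ae_right (f := fun t => C t N2 - C t 0) mNx Nx0).
  by apply: cvgB; apply: partial_x_continuous.
move=> x N1x nNx; have x0 : 0 <= x by apply: le_trans N10 (ltW N1x).
suff : C x N2 <= C x 0 + dx C ζ 0 * N2 by lra.
apply: (partial_y_ae_bound_le x0 N20 (measurable_xsection _ mNb) (HNx x nNx)).
move=> y y0 nS; apply: contrapT => H; apply: nS; rewrite /xsection /= inE.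
by apply: HNb => /= /(_ x0 y0).
Qed.

End partial_derivatives.

Section survival_integrals.
Context {R : realType}.
Local Notation mu := (@lebesgue_measure R).
Local Notation Rplus := (`[0%R, +oo[%classic : set R).

Let mRplus : measurable Rplus. Proof. exact: measurable_itv. Qed.

Let Rplus_ge0 a : Rplus a -> 0 <= a.
Proof. by rewrite /= in_itv /= andbT. Qed.

Lemma Iplus_ge0 (f : R -> \bar R) : (forall a, 0 <= a -> (0 <= f a)%E) -> (0 <= Iplus f)%E.
Proof. by move=> f0; apply: integral_ge0 => a /Rplus_ge0/f0. Qed.

Lemma integral_mul_pos_eq0 (f w : R -> R) :
  measurable_fun Rplus f -> measurable_fun Rplus w ->
  (forall a, 0 <= a -> 0 <= f a) -> (forall a, 0 <= a -> 0 <= w a) ->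
  (forall a, 0 < a -> 0 < w a) ->
  (\int[mu]_(a in Rplus) (f a * w a)%:E = 0)%E -> (\int[mu]_(a in Rplus) (f a)%:E = 0)%E.
Proof.
move=> mf mw f0 w0 wpos I0.
have mfw : measurable_fun Rplus (fun a => f a * w a) by exact: measurable_funM.
have [N [mN N0 HN]] : ae_eq mu Rplus (fun a => (f a * w a)%:E) (cst 0%E).
  apply/(ae_eq_integral_abs mu mRplus _).1; first exact/measurable_EFinP.
  rewrite -I0; apply: eq_integral => a /[!inE] /Rplus_ge0 a0.
  by rewrite gee0_abs // lee_fin mulr_ge0 ?f0 ?w0.
rewrite -(integral0 mu Rplus); apply: ae_eq_integral => //; first exact/measurable_EFinP.
exists (N `|` [set 0]); split; first exact: measurableU.
  apply/eqP; rewrite eq_le measure_ge0 andbT; apply: le_trans (measureU2 _ _ _) _ => //.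
  rewrite [X in (X + _ <= _)%E](_ : _ = 0%E); last exact: N0.
  by rewrite [X in (_ + X <= _)%E](_ : _ = 0%E) ?adde0 //; exact: lebesgue_measure_set1.
move=> a /= Ha; apply: contrapT => Hn; apply: Ha => Da.
have a0 : 0 < a by rewrite lt_neqAle Rplus_ge0 // andbT; apply/eqP => a0; apply: Hn; right.
have : f a * w a = 0.
  by apply: contrapT => fw; apply: Hn; left; apply: HN => /= /(_ Da) [].
by move/eqP; rewrite mulf_eq0 (gt_eqF (wpos _ a0)) orbF => /eqP ->.
Qed.

Variable k : R -> R.
Hypotheses (k0 : forall u, 0 <= u -> 0 <= k u) (mk : measurable_fun Rplus k).

Lemma cumul_ge0 a : 0 <= a -> (0 <= cumul k a)%E.
Proof.
move=> a0; apply: integral_ge0 => u /=; rewrite in_itv /= => /andP[u0 _].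
by rewrite lee_fin k0.
Qed.

Lemma le_cumul a a' : 0 <= a -> a <= a' -> (cumul k a <= cumul k a')%E.
Proof.
move=> a0 aa'; apply: ge0_subset_integral => //; try exact: measurable_itv.
- apply/measurable_EFinP; apply: (measurable_funS _ _ mk) => //.
  by move=> u /=; rewrite !in_itv /= => /andP[-> _].
- by move=> u /=; rewrite in_itv /= => /andP[u0 _]; rewrite lee_fin k0.
- by move=> u /=; rewrite !in_itv /= => /andP[-> ua]; rewrite (le_trans ua aa').
Qed.

(* Extended by [1] to negative ages, so that it is nonincreasing, hence
   measurable, on the whole line. *)
Definition survival (a : R) : R := fine (expeR (- cumul k (Num.max a 0%R)))%E.

Lemma survival_ge0 a : 0 <= survival a.
Proof. by rewrite fine_ge0 // expeR_ge0. Qed.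

Lemma survival_nonincr : {homo survival : x y /~ x <= y}.
Proof.
move=> x y xy; have c0 z : (0 <= cumul k (Num.max z 0%R))%E.
  by apply: cumul_ge0; rewrite le_max lexx orbT.
have fin z : expeR (- cumul k (Num.max z 0%R)) \is a fin_num.
  by move: (c0 z); case: (cumul k _).
apply: fine_le => //; rewrite lee_expeR leeN2; apply: le_cumul.
  by rewrite le_max lexx orbT.
by rewrite ge_max le_max xy /= le_max lexx orbT.
Qed.

Lemma survE m a : 0 <= a -> surv k m a = (survival a * expR (- (m * a)))%:E.
Proof.
move=> a0; rewrite /surv /survival (max_idPl a0).
by have := cumul_ge0 a0; case: (cumul k a) => [r| |] //= _; rewrite ?expRD ?mul0r.
Qed.

Variable b : R -> R.
Hypotheses (b0 : forall u, 0 <= u -> 0 <= b u) (mb : measurable_fun Rplus b).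

Definition birth_density (m a : R) : R := b a * survival a * expR (- (m * a)).

Lemma measurable_birth_density m : measurable_fun Rplus (birth_density m).
Proof.
apply: measurable_funM; first apply: measurable_funM => //.
  by apply: nonincreasing_measurable => // x y xy; exact: survival_nonincr.
apply: measurable_funTS; apply: measurableT_comp; first exact: measurable_expR.
apply: measurableT_comp; first exact: oppr_measurable.
exact: measurable_funM.
Qed.

Lemma birth_density_ge0 m a : 0 <= a -> 0 <= birth_density m a.
Proof. by move=> a0; rewrite !mulr_ge0 ?b0 ?survival_ge0 ?expR_ge0. Qed.

Lemma Iplus_birth_densityE m :
  Iplus (fun a => (b a)%:E * surv k m a)%E = (\int[mu]_(a in Rplus) (birth_density m a)%:E)%E.
Proof.
apply: eq_integral => a /[!inE] /Rplus_ge0 a0.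
by rewrite survE // -EFinM /birth_density mulrA.
Qed.

Lemma birth_density_shift m m' a :
  birth_density m a = birth_density m' a * expR ((m' - m) * a).
Proof. by rewrite /birth_density -!mulrA -expRD; do 2 congr (_ * _); congr expR; ring. Qed.

Lemma Iplus_birth_lt m m' : m < m' ->
  Iplus (fun a => (b a)%:E * surv k m' a)%E \is a fin_num ->
  Iplus (fun a => (b a)%:E * surv k m' a)%E != 0%E ->
  (Iplus (fun a => (b a)%:E * surv k m' a) < Iplus (fun a => (b a)%:E * surv k m a))%E.
Proof.
rewrite !Iplus_birth_densityE => mm' fin nz.
pose w a := expR ((m' - m) * a) - 1.
have w0 a : 0 <= a -> 0 <= w a.
  by move=> a0; rewrite /w subr_ge0 -expR0 ler_expR mulr_ge0 // subr_ge0 ltW.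
have wpos a : 0 < a -> 0 < w a.
  by move=> a0; rewrite /w subr_gt0 -expR0 ltr_expR mulr_gt0 // subr_gt0.
have mw : measurable_fun Rplus w.
  apply: measurable_funTS; apply: measurable_funB => //.
  by apply: measurableT_comp; [exact: measurable_expR | exact: measurable_funM].
have mG := measurable_birth_density m'.
have mGw : measurable_fun Rplus (fun a => birth_density m' a * w a).
  exact: measurable_funM.
have -> : (\int[mu]_(a in Rplus) (birth_density m a)%:E =
    \int[mu]_(a in Rplus) (birth_density m' a)%:E +
    \int[mu]_(a in Rplus) (birth_density m' a * w a)%:E)%E.
  rewrite -ge0_integralD //.
  - apply: eq_integral => a _; rewrite -EFinD (birth_density_shift m m') /w; congr _%:E.
    by ring.
  - by move=> a /Rplus_ge0 a0; rewrite lee_fin birth_density_ge0.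
  - exact/measurable_EFinP.
  - by move=> a /Rplus_ge0 a0; rewrite lee_fin mulr_ge0 ?birth_density_ge0 ?w0.
  - exact/measurable_EFinP.
rewrite lteDl // lt_def; apply/andP; split.
  apply: contra_neq nz => /integral_mul_pos_eq0; apply => //.
  exact: birth_density_ge0.
by apply: integral_ge0 => a /Rplus_ge0 a0; rewrite lee_fin mulr_ge0 ?birth_density_ge0 ?w0.
Qed.

End survival_integrals.

Unset Implicit Arguments.

Theorem proposition4 (R : realType) (k d b bt : R -> R) (c eta ct : R -> R -> R) :
  (* k, d, b, bt >= 0 and measurable on R_+ *)
  (forall a, 0 <= a -> 0 <= k a /\ 0 <= d a /\ 0 <= b a /\ 0 <= bt a) ->
  measurable_fun (`[0%R, +oo[%classic : set R) k -> measurable_fun (`[0%R, +oo[%classic : set R) d ->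
  measurable_fun (`[0%R, +oo[%classic : set R) b -> measurable_fun (`[0%R, +oo[%classic : set R) bt ->
  Iplus (fun a => (k a)%:E) = +oo%E ->
  Iplus (fun a => (d a)%:E) = +oo%E ->
  (1 < Iplus (fun a => (b a)%:E * surv k 0 a + (bt a)%:E * surv d 0 a))%E ->
  (Iplus (fun a => (b a)%:E * surv k 0 a + (bt a)%:E * surv d 0 a) < +oo)%E ->
  (* c, eta, ct in L^oo_loc(R^2), vanish at (0,0), nonnegative on R_+^2 *)
  Linfty_loc c -> Linfty_loc eta -> Linfty_loc ct ->
  c 0 0 = 0 -> eta 0 0 = 0 -> ct 0 0 = 0 ->
  (forall x y, 0 <= x -> 0 <= y -> 0 <= c x y /\ 0 <= eta x y /\ 0 <= ct x y) ->
  let ctot := fun x y => c x y + eta x y in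
  (* monotonicity assumptions on the partial derivatives, on R_+^2 *)
  partials_on_Rplus2 ctot -> partials_on_Rplus2 ct ->
  (forall x y, 0 <= x -> 0 <= y ->
     0 < dx ctot x y /\ 0 <= dy ctot x y /\ 0 <= dx ct x y /\ 0 < dy ct x y) ->
  (forall x0 y0, 0 <= x0 -> 0 <= y0 ->
     (ct x0 y @[y --> +oo] --> +oo) /\ (c x y0 @[x --> +oo] --> +oo)) ->
  (* || d_y ctot ||_oo (over R_+^2) <= inf_{R_+^2} d_x ctot *)
  (forall x' y', 0 <= x' -> 0 <= y' ->
     {ae leb2, forall p : R * R, 0 <= p.1 -> 0 <= p.2 ->
        `|dy ctot p.1 p.2| <= dx ctot x' y'}) ->
  forall Nstar : R, is_Nstar k b ctot Nstar ->
  forall N1 N2 : R, 0 <= N1 -> 0 <= N2 ->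
  (Iplus (fun a => (bt a)%:E * surv d (ct N1 N2) a)
     * Iplus (fun a => (k a + eta N1 N2)%:E * surv k (ctot N1 N2) a)
   + Iplus (fun a => (b a)%:E * surv k (ctot N1 N2) a) = 1)%E ->
  (N1%:E * Iplus (fun a => surv d (ct N1 N2) a)
     * Iplus (fun a => (k a + eta N1 N2)%:E * surv k (ctot N1 N2) a)
   - N2%:E * Iplus (fun a => surv k (ctot N1 N2) a) = 0)%E ->
  Nstar <= N1 + N2.
Proof.
move=> kdb0 mk _ mb _ _ _ _ _ _ _ _ _ _ _ cpos ctot dC _ hder _ hae.
move=> Nstar HN N1 N2 N10 N20 eq1 _.
case: HN => [[_ [mu0 [_ [Imu0 [_ ctot_mu0]]]]] | [_ ->]]; last exact: addr_ge0.
rewrite leNgt; apply/negP => ltNstar.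
have k0 u : 0 <= u -> 0 <= k u by case/kdb0.
have b0 u : 0 <= u -> 0 <= b u by case/kdb0 => _ [_ []].
have incr : ctot (N1 + N2) 0 < ctot Nstar 0.
  apply: (partial_x_pos_lt dC (addr_ge0 N10 N20) ltNstar (lexx 0)) => x x0.
  by case: (hder x 0 x0 (lexx 0)).
have lt_mu0 : ctot N1 N2 < mu0.
  by rewrite -ctot_mu0; apply: le_lt_trans (le_shift_to_first dC N10 N20 hae) incr.
have := Iplus_birth_lt k0 mk b0 mb lt_mu0.
rewrite Imu0 oner_neq0 => /(_ isT isT); rewrite ltNge -eq1 => /negP; apply.
apply: lee_paddl => //; apply: mule_ge0; apply: Iplus_ge0 => a a0.
  by apply: mule_ge0 (expeR_ge0 _); rewrite lee_fin; case: (kdb0 a a0) => _ [_ []].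
apply: mule_ge0 (expeR_ge0 _); rewrite lee_fin addr_ge0 ?k0 //.
by case: (cpos N1 N2 N10 N20) => _ [].
Qed.
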